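(* Let $p\colon X\to B$ be a Boolean set. For an ultrafilter $F$ of $B$ and $a\in X$ with $p(a)\in F$, let $[a]_F$ be the set of $b\in X$ with $p(b)\in F$ for which there exists $c\in X$ with $p(c)\in F$ and $c\le a$, $c\le b$. Then: for every ultrafilter $F$ of $B$ and every $a$ with $p(a)\in F$, the set $[a]_F$ is an ultrafilter of $(X,\le)$; every ultrafilter of $(X,\le)$ is of the form $[a]_F$ for some ultrafilter $F$ of $B$ and some $a$ with $p(a)\in F$; and $[a]_F\cap[b]_F\neq\emptyset$ implies $[a]_F=[b]_F$.
   Context: Convention: a ''Boolean algebra'' means a generalized Boolean algebra (relatively complemented distributive lattice with $0$). Presheaf of sets over a meet semilattice $E$: pairwise disjoint sets $X_e$, restriction maps $x\mapsto x|^e_f$ for $e\ge f$ with $|^e_e=\mathrm{id}$ and $(x|^e_f)|^f_g=x|^e_g$; $p(x)=e$ iff $x\in X_e$; global support: all $X_e\neq\emptyset$. Order: $x\le y$ iff $p(x)\le p(y)$ and $x=y|^{p(y)}_{p(x)}$. Compatibility $x\sim y$: $x\wedge y$ exists and $p(x\wedge y)=p(x)\wedge p(y)$. A Boolean set is a presheaf $p\colon X\to B$ with global support over a Boolean algebra $B$ such that $(X,\le)$ has least element $0$, compatible pairs have joins, and $p(x)=0\Rightarrow x=0$. In a poset, a filter is a non-empty, down directed, upwardly closed subset; proper if not the whole poset; an ultrafilter is a maximal proper filter. *)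

From HB Require Import structures.
From mathcomp Require Import all_boot all_order.
Set Implicit Arguments. Unset Strict Implicit. Unset Printing Implicit Defensive.
Import Order.TTheory.
Local Open Scope order_scope.

(* A "Boolean algebra" in the paper's sense (generalized Boolean algebra:
   relatively complemented distributive lattice with 0) is a
   [cbDistrLatticeType d] in MathComp. *)

Section PosetNotions.
Variables (T : Type) (le : T -> T -> Prop).

Definition is_filter (S : T -> Prop) : Prop :=
  (exists x, S x) /\
  (forall x y, S x -> S y -> exists z, S z /\ le z x /\ le z y) /\
  (forall x y, S x -> le x y -> S y).

Definition is_proper (S : T -> Prop) : Prop := exists x, ~ S x.

Definition is_ultrafilter (S : T -> Prop) : Prop :=
  is_filter S /\ is_proper S /\
  (forall G : T -> Prop, is_filter G -> is_proper G ->
     (forall x, S x -> G x) -> forall x, G x <-> S x).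

Definition is_glb (x y m : T) : Prop :=
  le m x /\ le m y /\ forall z, le z x -> le z y -> le z m.

Definition is_lub (x y j : T) : Prop :=
  le x j /\ le y j /\ forall z, le x z -> le y z -> le j z.

Definition is_least (z : T) : Prop := forall x, le z x.
End PosetNotions.

(** A presheaf of sets with global support over a meet semilattice [B]:
    the disjoint family (X_e)_e is encoded as one type [X] with the
    projection [p] (x \in X_e iff p x = e); [res x f] is x|^{p x}_f,
    only specified when f <= p x. *)
Record presheaf d (B : cbDistrLatticeType d) (X : Type) := Presheaf {
  p : X -> B;
  res : X -> B -> X;
  res_p : forall x f, f <= p x -> p (res x f) = f;
  res_id : forall x, res x (p x) = x;
  res_comp : forall x f g, g <= f -> f <= p x -> res (res x f) g = res x g;
  global_support : forall e : B, exists x, p x = e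
}.

Section PresheafNotions.
Variables (d : Order.disp_t) (B : cbDistrLatticeType d) (X : Type)
  (P : presheaf B X).

Definition leX (x y : X) : Prop :=
  p P x <= p P y /\ x = res P y (p P x).

Definition compatible (x y : X) : Prop :=
  exists m, is_glb leX x y m /\ p P m = p P x `&` p P y.

Definition is_boolean_set : Prop :=
  exists z : X, is_least leX z /\
    (forall x y, compatible x y -> exists j, is_lub leX x y j) /\
    (forall x, p P x = \bot -> x = z).

Definition cls (F : B -> Prop) (a : X) : X -> Prop :=
  fun b => F (p P b) /\ exists c, F (p P c) /\ leX c a /\ leX c b.
End PresheafNotions.

(* An ultrafilter U of X projects along p to an ultrafilter F of B, and U is
   the class [a]_F of any of its elements a: two elements of U agree below
   some common lower bound, which lies in U.  Conversely [a]_F is a proper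
   filter, and it is maximal because an element w of a larger filter G with
   p(w) outside F is separated from F by some f in F with f /\ p(w) = 0;
   restricting a below f and meeting with w then forces the least element
   of X, whose support is 0, into G. *)

From HB Require Import structures.
From mathcomp Require Import all_boot all_order.
From Stdlib Require Import Classical.
Set Implicit Arguments. Unset Strict Implicit. Unset Printing Implicit Defensive.
Import Order.TTheory.
Local Open Scope order_scope.

Section LatticeFilters.
Variables (d : Order.disp_t) (L : bLatticeType d).

Let leL (e f : L) : Prop := e <= f.

Lemma proper_filter_bot (F : L -> Prop) :
  is_filter leL F -> is_proper F -> ~ F \bot.
Proof. by move=> [_ [_ upF]] [x nFx] Fbot; apply/nFx/(upF _ _ Fbot)/le0x. Qed.

Lemma filter_generated_meet (F : L -> Prop) (e : L) : is_filter leL F ->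
  is_filter leL (fun y => exists f, F f /\ f `&` e <= y).
Proof.
move=> [[x0 Fx0] [dirF upF]]; split; first by exists (x0 `&` e), x0.
split=> [y1 y2 [f1 [Ff1 le1]] [f2 [Ff2 le2]]|y1 y2 [f [Ff lef]] le12].
- have [g [Fg [gf1 gf2]]] := dirF _ _ Ff1 Ff2.
  have meetI f : g <= f -> g `&` e <= f `&` e by move=> gf; rewrite leI2 ?lexx.
  exists (g `&` e); split; first by exists g.
  by split; [apply: le_trans le1 | apply: le_trans le2]; apply: meetI.
- by exists f; split=> //; apply: le_trans le12.
Qed.

Lemma ultrafilter_disjoint (F : L -> Prop) (e : L) :
  is_ultrafilter leL F -> ~ F e -> exists f, F f /\ f `&` e = \bot.
Proof.
move=> [filF [_ maxF]] nFe.
have [[x0 Fx0] _] := filF.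
pose G y := exists f, F f /\ f `&` e <= y.
have filG : is_filter leL G := filter_generated_meet e filF.
have FG x : F x -> G x by move=> Fx; exists x; split=> //; apply: leIl.
have [properG|improperG] := classic (is_proper G).
  by case: nFe; apply/(maxF G filG properG FG); exists x0; split=> //; apply: leIr.
have [f [Ff fe0]] : G \bot by apply: NNPP => nGbot; apply: improperG; exists \bot.
by exists f; split=> //; apply/eqP; rewrite -lex0.
Qed.

End LatticeFilters.

Section BooleanSet.
Variables (d : Order.disp_t) (B : cbDistrLatticeType d) (X : Type)
  (P : presheaf B X).

Let leB (e f : B) : Prop := e <= f.

Lemma leX_refl x : leX P x x.
Proof. by split; [exact: lexx | rewrite res_id]. Qed.

Lemma leX_p x y : leX P x y -> p P x <= p P y.
Proof. by case. Qed.

Lemma leX_trans x y z : leX P x y -> leX P y z -> leX P x z.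
Proof.
move=> [pxy ex] [pyz ey]; split; first exact: le_trans pxy pyz.
by rewrite {1}ex ey res_comp.
Qed.

Lemma res_leX v g : g <= p P v -> leX P (res P v g) v.
Proof. by move=> gv; split; rewrite res_p. Qed.

Lemma res_of_leX c v g : leX P c v -> g <= p P c -> res P c g = res P v g.
Proof. by move=> [cv ec] gc; rewrite ec res_comp. Qed.

Lemma res_leX_mono v g g' :
  g <= g' -> g' <= p P v -> leX P (res P v g) (res P v g').
Proof.
move=> gg' g'v; rewrite -(res_comp gg' g'v).
by apply: res_leX; rewrite res_p.
Qed.

Lemma leX_of_common_upper w c a :
  leX P w a -> leX P c a -> p P w <= p P c -> leX P w c.
Proof. by move=> [_ ew] ca wc; split; rewrite ?(res_of_leX ca wc). Qed.

Lemma cls_res (F : B -> Prop) a g : F g -> g <= p P a -> cls P F a (res P a g).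
Proof.
move=> Fg ga; rewrite /cls res_p //; split=> //.
by exists (res P a g); rewrite res_p //; split=> //; split;
  [exact: res_leX | exact: leX_refl].
Qed.

Lemma cls_refl (F : B -> Prop) a : F (p P a) -> cls P F a a.
Proof. by move=> Fa; rewrite -{2}(res_id P a); apply: cls_res. Qed.

Lemma cls_filter (F : B -> Prop) a :
  is_filter leB F -> F (p P a) -> is_filter (leX P) (cls P F a).
Proof.
move=> [_ [dirF upF]] Fa; split; first by exists a; apply: cls_refl.
split=> [b1 b2 [_ [c1 [Fc1 [c1a c1b]]]] [_ [c2 [Fc2 [c2a c2b]]]]|].
- have [g [Fg [gc1 gc2]]] := dirF _ _ Fc1 Fc2.
  have ga : g <= p P a := le_trans gc1 (leX_p c1a).
  have below c : leX P c a -> g <= p P c -> leX P (res P a g) c.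
    by move=> ca gc; apply: leX_of_common_upper (res_leX ga) ca _; rewrite res_p.
  exists (res P a g); split; first exact: cls_res.
  by split; [apply: leX_trans c1b | apply: leX_trans c2b]; apply: below.
- move=> x y [Fx [c [Fc [ca cx]]]] xy; split; first exact: upF Fx (leX_p xy).
  by exists c; split=> //; split=> //; apply: leX_trans cx xy.
Qed.

Lemma cls_overlap_sub (F : B -> Prop) a b : is_filter leB F ->
  (exists x, cls P F a x /\ cls P F b x) -> forall y, cls P F a y -> cls P F b y.
Proof.
move=> [_ [dirF _]] [x [[_ [c1 [Fc1 [c1a c1x]]]] [_ [c2 [Fc2 [c2b c2x]]]]]]
  y [Fy [c [Fc [ca cy]]]].
have [g [Fg [gc1 gc]]] := dirF _ _ Fc1 Fc.
have [h [Fh [hg hc2]]] := dirF _ _ Fg Fc2.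
have hc1 : h <= p P c1 := le_trans hg gc1.
have hc : h <= p P c := le_trans hg gc.
(* c2 and c1 lie below x, c1 and c lie below a: all restrictions to h agree. *)
have same_res : res P c2 h = res P c h.
  by rewrite (res_of_leX c2x hc2) -(res_of_leX c1x hc1) (res_of_leX c1a hc1)
    -(res_of_leX ca hc).
split=> //; exists (res P c2 h); rewrite res_p //; split=> //; split.
- exact: leX_trans (res_leX hc2) c2b.
- by rewrite same_res; apply: leX_trans (res_leX hc) cy.
Qed.

Definition push_filter (U : X -> Prop) (e : B) : Prop :=
  exists u, U u /\ p P u <= e.

Definition pull_filter (U : X -> Prop) (G : B -> Prop) (y : X) : Prop :=
  exists u g, U u /\ G g /\ g <= p P u /\ leX P (res P u g) y.

Lemma push_filter_filter U : is_filter (leX P) U -> is_filter leB (push_filter U).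
Proof.
move=> [[a Ua] [dirU _]]; split; first by exists (p P a), a.
split=> [e1 e2 [u1 [Uu1 ue1]] [u2 [Uu2 ue2]]|e1 e2 [u [Uu ue1]] e12].
- have [u [Uu [uu1 uu2]]] := dirU _ _ Uu1 Uu2.
  exists (p P u); split; first by exists u.
  by split; [apply: le_trans ue1 | apply: le_trans ue2]; apply: leX_p.
- by exists u; split=> //; apply: le_trans e12.
Qed.

Lemma pull_filter_res U G u g :
  U u -> G g -> g <= p P u -> pull_filter U G (res P u g).
Proof. by move=> Uu Gg gu; exists u, g; do 3!split=> //; apply: leX_refl. Qed.

Lemma pull_filter_sub U G :
  (forall e, push_filter U e -> G e) -> forall y, U y -> pull_filter U G y.
Proof.
by move=> UG y Uy; rewrite -(res_id P y); apply: pull_filter_res => //;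
  apply: UG; exists y.
Qed.

Lemma pull_filter_filter U G : is_filter (leX P) U -> is_filter leB G ->
  (forall e, push_filter U e -> G e) -> is_filter (leX P) (pull_filter U G).
Proof.
move=> [[a Ua] [dirU _]] [_ [dirG _]] UG.
split; first by exists a; apply: pull_filter_sub.
split=> [y1 y2 [u1 [g1 [Uu1 [Gg1 [gu1 r1]]]]] [u2 [g2 [Uu2 [Gg2 [gu2 r2]]]]]|].
- have [u [Uu [uu1 uu2]]] := dirU _ _ Uu1 Uu2.
  have [g3 [Gg3 [g31 g32]]] := dirG _ _ Gg1 Gg2.
  have [g [Gg [gg3 gu]]] := dirG _ _ Gg3 (UG _ (ex_intro _ u (conj Uu (lexx _)))).
  have below ui gi : leX P u ui -> g3 <= gi -> gi <= p P ui ->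
      leX P (res P u g) (res P ui gi).
    move=> uui g3i giu; rewrite (res_of_leX uui gu).
    exact: res_leX_mono (le_trans gg3 g3i) giu.
  exists (res P u g); split; first exact: pull_filter_res.
  by split; [apply: leX_trans r1 | apply: leX_trans r2]; apply: below.
- move=> y1 y2 [u [g [Uu [Gg [gu r]]]]] y12; exists u, g; do 3!split=> //.
  exact: leX_trans r y12.
Qed.

Lemma filter_eq_cls_push U a :
  is_filter (leX P) U -> U a -> forall x, U x <-> cls P (push_filter U) a x.
Proof.
move=> [_ [dirU upU]] Ua x; split=> [Ux | [_ [c [[u [Uu uc]] [ca cx]]]]].
- split; first by exists x.
  have [c [Uc [ca cx]]] := dirU _ _ Ua Ux.
  by exists c; split; [exists c | split].
- have [v [Uv [vu va]]] := dirU _ _ Uu Ua.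
  have vc : leX P v c := leX_of_common_upper va ca (le_trans (leX_p vu) uc).
  exact: upU _ _ (upU _ _ Uv vc) cx.
Qed.

Variables (z : X) (z_least : is_least (leX P) z)
  (p_bot_least : forall x, p P x = \bot -> x = z).

Lemma p_least : p P z = \bot.
Proof.
have [x px] := global_support P \bot.
by apply/eqP; rewrite -lex0 -px; apply: leX_p.
Qed.

Lemma leX_bot x : p P x <= \bot -> x = z.
Proof. by rewrite lex0 => /eqP; apply: p_bot_least. Qed.

Lemma proper_filterX_least (U : X -> Prop) :
  is_filter (leX P) U -> is_proper U -> ~ U z.
Proof. by move=> [_ [_ upU]] [y nUy] Uz; apply/nUy/(upU _ _ Uz). Qed.

Lemma cls_maximal (F : B -> Prop) a (G : X -> Prop) :
  is_ultrafilter leB F -> F (p P a) -> is_filter (leX P) G -> is_proper G ->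
  (forall x, cls P F a x -> G x) -> forall x, G x -> cls P F a x.
Proof.
move=> ultF Fa filG properG clsG x Gx.
have [[_ [dirF upF]] _] := ultF.
have [_ [dirG _]] := filG.
have [w [Gw [wx wa]]] := dirG _ _ Gx (clsG _ (cls_refl Fa)).
suff Fw : F (p P w) by split; [exact: upF Fw (leX_p wx) | exists w].
apply: NNPP => nFw.
have [f [Ff fw0]] := ultrafilter_disjoint ultF nFw.
have [g [Fg [gf ga]]] := dirF _ _ Ff Fa.
have [v [Gv [vg vw]]] := dirG _ _ (clsG _ (cls_res Fg ga)) Gw.
have pv0 : p P v <= \bot.
  by rewrite -fw0 lexI (leX_p vw) andbT (le_trans (leX_p vg)) // res_p.
by apply: (proper_filterX_least filG properG); rewrite -(leX_bot pv0).
Qed.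

Lemma cls_ultrafilter (F : B -> Prop) a :
  is_ultrafilter leB F -> F (p P a) -> is_ultrafilter (leX P) (cls P F a).
Proof.
move=> ultF Fa; have [filF [properF _]] := ultF.
split; first exact: cls_filter.
split; first by exists z => -[Fz _]; apply: (proper_filter_bot filF properF);
  rewrite -p_least.
move=> G filG properG clsG x; split; [exact: cls_maximal | exact: clsG].
Qed.

Lemma push_filter_ultrafilter U :
  is_ultrafilter (leX P) U -> is_ultrafilter leB (push_filter U).
Proof.
move=> [filU [properU maxU]].
have filF := push_filter_filter filU.
split=> //; split.
  exists \bot => -[u [Uu u0]].
  by apply: (proper_filterX_least filU properU); rewrite -(leX_bot u0).
move=> G filG properG FG e; split=> [Ge|]; last exact: FG.
have [[a Ua] _] := filU.
have [_ [dirG _]] := filG.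
have [g [Gg [ge ga]]] := dirG _ _ Ge (FG _ (ex_intro _ a (conj Ua (lexx _)))).
have properU' : is_proper (pull_filter U G).
  exists z => -[u [g' [_ [Gg' [gu r]]]]].
  apply: (proper_filter_bot filG properG); suff <- : g' = \bot by [].
  by apply/eqP; rewrite -lex0 -p_least -(res_p gu); apply: leX_p.
have UU' := maxU _ (pull_filter_filter filU filG FG) properU'
  (pull_filter_sub FG).
exists (res P a g); rewrite res_p //; split=> //.
by apply/UU'; apply: pull_filter_res.
Qed.

End BooleanSet.

Theorem proposition3p6 (d : Order.disp_t) (B : cbDistrLatticeType d) (X : Type)
  (P : presheaf B X) (HB : is_boolean_set P) :
  (forall F : B -> Prop, is_ultrafilter (fun e f : B => e <= f) F ->
     forall a : X, F (p P a) -> is_ultrafilter (leX P) (cls P F a)) /\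
  (forall U : X -> Prop, is_ultrafilter (leX P) U ->
     exists (F : B -> Prop) (a : X),
       is_ultrafilter (fun e f : B => e <= f) F /\ F (p P a) /\
       (forall x, U x <-> cls P F a x)) /\
  (forall F : B -> Prop, is_ultrafilter (fun e f : B => e <= f) F ->
     forall a b : X, F (p P a) -> F (p P b) ->
       (exists x, cls P F a x /\ cls P F b x) ->
       forall x, cls P F a x <-> cls P F b x).
Proof.
have [z [z_least [_ p_bot_least]]] := HB.
split; first by move=> F ultF a; apply: (cls_ultrafilter z_least p_bot_least).
split.
  move=> U ultU; have [[[a Ua] _] _] := ultU.
  exists (push_filter P U), a.
  split; first exact: (push_filter_ultrafilter z_least p_bot_least).
  by split; [exists a | exact: filter_eq_cls_push ultU.1 Ua].
move=> F [filF _] a b _ _ [x [xa xb]] y.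
by split; apply: cls_overlap_sub filF _ y; exists x.
Qed.
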